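(* Let $r\ge1$ and $n\ge2r$. For every integer $p\ge1$, the restricted Casimir polynomial $C_p(x_1,\dots,x_r)$ lies in the subalgebra $$\mathbb{C}\bigl[\,p_{2k}(x_1+\rho_1,\dots,x_r+\rho_r)\;:\;1\le k\le \lfloor p/2\rfloor\,\bigr]$$ of $\mathbb{C}[x_1,\dots,x_r]$ generated by constants and these even power sums.
   Context: $\rho_i=\frac{n-(2i-1)}{2}$ for $1\le i\le r$, and $p_k(y_1,\dots,y_r)=\sum_j y_j^k$. Casimir eigenvalues. For $\nu=(\nu_1,\dots,\nu_n)$ and an integer $p\ge 0$, let $$c_p(\nu)=\sum_{i=1}^n(\nu_i+n-i)^p\prod_{j\ne i}\Bigl(1-\frac{1}{\nu_i-\nu_j+j-i}\Bigr).$$ This rational expression is in fact a polynomial in $\nu$; it is the eigenvalue of the higher Casimir operator $\mathrm{tr}(\mathbf E^p)$ of $\mathfrak{gl}_n$ on the irreducible module of highest weight $\nu$. The restricted Casimir polynomial is $$C_p(x_1,\dots,x_r)=c_p(x_1,\dots,x_r,\underbrace{0,\dots,0}_{n-2r},-x_r,\dots,-x_1).$$ *)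

From HB Require Import structures.
From mathcomp Require Import all_boot all_order all_algebra all_field.
Unset Implicit Arguments. Unset Printing Implicit Defensive.
Import Order.TTheory GRing.Theory Num.Theory.
Local Open Scope ring_scope.

Definition xext (r : nat) (x : 'I_r -> algC) (k : nat) : algC :=
  odflt 0 (omap x (insub k)).

(* nu = (x_1,...,x_r, 0,...,0, -x_r,...,-x_1), 0-based positions i < n *)
Definition nu (n r : nat) (x : 'I_r -> algC) (i : 'I_n) : algC :=
  if (i < r)%N then xext r x i
  else if (n - r <= i)%N then - xext r x (n.-1 - i)
  else 0.

(* c_p(nu) = sum_i (nu_i + n - i)^p prod_{j<>i} (1 - 1/(nu_i - nu_j + j - i)),
   written with 0-based indices (1-based i becomes i+1, so n - i becomes n-1-i). *)
Definition casimir (n p : nat) (v : 'I_n -> algC) : algC :=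
  \sum_(i < n) (v i + (n.-1 - i)%:R) ^+ p *
     \prod_(j < n | j != i) (1 - (v i - v j + j%:R - i%:R)^-1).

(* points where none of the denominators of c_p(nu) vanish *)
Definition generic (n r : nat) (x : 'I_r -> algC) : Prop :=
  forall i j : 'I_n, i != j -> nu n r x i - nu n r x j + j%:R - i%:R != 0.

(* rho_{k+1} = (n - (2(k+1) - 1))/2 for 0-based k *)
Definition rho (n k : nat) : algC := (n%:R - (2 * k + 1)%:R) / 2%:R.

Definition powsum (r k : nat) (y : 'I_r -> algC) : algC := \sum_(i < r) y i ^+ k.

(* evaluation of a polynomial in m variables given as a finite list of
   (coefficient, exponent vector) monomials at the point g *)
Definition mpoly_eval (m : nat) (Q : seq (algC * ('I_m -> nat))) (g : 'I_m -> algC) : algC :=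
  \sum_(t <- Q) t.1 * \prod_(k < m) g k ^+ t.2 k.

(* Put y_i = nu_i + (n - 1 - i) - (n - 1)/2 (0-based indices).  Then
   c_p = \sum_m binom(p, m) ((n - 1)/2)^(p - m) S_m with S_m = \sum_i w_i y_i^m and
   w_i = \prod_(j <> i) (1 - 1/(y_i - y_j)).  By partial fractions,
   G(t) := 1 - \sum_m S_m t^(m+1) equals \prod_i (1 - (y_i + 1) t) / (1 - y_i t), so
   t G'/G = \sum_k (p_k(y) - p_k(y + 1)) t^k, and Newton's recurrence writes
   S_m as a polynomial in the power sums p_l(y), l <= m.  For the restricted weight the
   y_i are z_1, ..., z_r (z_i = x_i + rho_i), their opposites and constants, so
   p_l(y) = (1 + (-1)^l) p_l(z) + const, and only the even power sums of z survive. *)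

From mathcomp Require Import all_boot all_order all_algebra all_field.
From mathcomp Require Import zify ring.
Import Order.TTheory GRing.Theory Num.Theory.
Set Implicit Arguments.
Unset Strict Implicit.
Local Open Scope ring_scope.

Section FormalSeries.
Variable R : comNzRingType.
Implicit Types (a b f g h : nat -> R) (p q : {poly R}).

Definition series_mul f h M : R := \sum_(i < M.+1) f i * h (M - i)%N.

Lemma coefM_series p q f h M :
    (forall i, (i <= M)%N -> p`_i = f i) -> (forall i, (i <= M)%N -> q`_i = h i) ->
  (p * q)`_M = series_mul f h M.
Proof.
move=> pf qh; rewrite coefM; apply: eq_bigr => i _.
by rewrite pf ?qh ?leq_subr // -ltnS.
Qed.

Lemma coefM_series3 f g h M :
  let P k := \poly_(i < M.+1) k i in
  (P f * (P g * P h))`_M = series_mul f (series_mul g h) M.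
Proof.
move=> P; have coefP k i : (i <= M)%N -> (P k)`_i = k i.
  by move=> le_iM; rewrite coef_poly ltnS le_iM.
apply: coefM_series => [|i le_iM]; first exact: coefP.
by apply: coefM_series => j le_ji; apply: coefP; apply: leq_trans le_iM.
Qed.

Lemma series_mulCA f g h M :
  series_mul f (series_mul g h) M = series_mul g (series_mul f h) M.
Proof. by rewrite -!coefM_series3 mulrCA. Qed.

Lemma series_mulC f h M : series_mul f h M = series_mul h f M.
Proof.
rewrite /series_mul (reindex_inj rev_ord_inj); apply: eq_bigr => i _ /=.
by rewrite subSS subKn 1?mulrC // -ltnS.
Qed.

Lemma series_mulA f g h M :
  series_mul (series_mul f g) h M = series_mul f (series_mul g h) M.
Proof. by rewrite series_mulC -!coefM_series3 mulrC mulrA. Qed.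

Lemma series_mulDl a b f M :
  series_mul (fun k => a k + b k) f M = series_mul a f M + series_mul b f M.
Proof. by rewrite -big_split; apply: eq_bigr => i _; rewrite mulrDl. Qed.

(* [is_logder a f] encodes t f'(t) = A(t) f(t) for the formal series
   A(t) = \sum_(k >= 1) a k t^k and f(t) = \sum_k f k t^k. *)
Definition is_logder a f :=
  forall M, M.+1%:R * f M.+1 = series_mul (fun k => a k.+1) f M.

Lemma eq_is_logder a a' f f' :
  (forall k, a k = a' k) -> (forall M, f M = f' M) -> is_logder a f -> is_logder a' f'.
Proof.
by move=> aa' ff' af M; rewrite -ff' af; apply: eq_bigr => i _; rewrite aa' ff'.
Qed.

Lemma is_logder_mul a b f h : is_logder a f -> is_logder b h ->
  is_logder (fun k => a k + b k) (series_mul f h).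
Proof.
move=> af bh M.
have -> : M.+1%:R * series_mul f h M.+1 =
    \sum_(i < M.+2) (i%:R * f i) * h (M.+1 - i)%N
  + \sum_(i < M.+2) f i * ((M.+1 - i)%N%:R * h (M.+1 - i)%N).
  rewrite /series_mul mulr_sumr -big_split; apply: eq_bigr => i _ /=.
  have -> : M.+1%:R = i%:R + (M.+1 - i)%N%:R :> R by rewrite -natrD subnKC // -ltnS.
  ring.
have -> : \sum_(i < M.+2) (i%:R * f i) * h (M.+1 - i)%N =
          series_mul (series_mul (fun k => a k.+1) f) h M.
  rewrite big_ord_recl mulr0n !mul0r add0r.
  by apply: eq_bigr => i _; rewrite /bump /= af subSS.
have -> : \sum_(i < M.+2) f i * ((M.+1 - i)%N%:R * h (M.+1 - i)%N) =
          series_mul f (series_mul (fun k => b k.+1) h) M.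
  rewrite big_ord_recr /= subnn mulr0n mul0r mulr0 addr0.
  by apply: eq_bigr => i _; rewrite subSn ?bh // -ltnS.
by rewrite series_mulDl series_mulA (series_mulCA f).
Qed.

(* The coefficients of (1 - (c + 1) t) / (1 - c t). *)
Definition factor_series (c : R) k := if k is k'.+1 then - c ^+ k' else 1.

Lemma is_logder_factor_series c :
  is_logder (fun k => c ^+ k - (c + 1) ^+ k) (factor_series c).
Proof.
move=> M; rewrite /series_mul big_ord_recr /= subnn mulr1.
set S := \sum_(i < M) (c + 1) ^+ i.+1 * c ^+ (M - i.+1).
have telescope : S = (c + 1) ^+ M.+1 - c ^+ M.+1 - c ^+ M.
  have := subrXX c (c + 1) M.+1; rewrite big_ord_recl /= subn0 expr0 mulr1.
  rewrite (eq_bigr (fun i : 'I_M => (c + 1) ^+ i.+1 * c ^+ (M - i.+1))) -/S.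
    by move=> E; rewrite -(opprB (c ^+ M.+1)) E; ring.
  by move=> i _; rewrite mulrC.
rewrite (eq_bigr (fun i : 'I_M => - c ^+ M + (c + 1) ^+ i.+1 * c ^+ (M - i.+1))).
  by rewrite big_split /= sumr_const card_ord -/S telescope; ring.
move=> i _ /=; rewrite -(subnSK (ltn_ord i)) /=.
have -> : c ^+ M = c ^+ i.+1 * c ^+ (M - i.+1) by rewrite -exprD subnKC.
ring.
Qed.

End FormalSeries.

Section Weights.
Variable F : fieldType.
Implicit Types (ys : seq F) (c u y : F).

Definition weight ys y := \prod_(b <- ys | b != y) (1 - (y - b)^-1).

Definition weighted_powsum ys m := \sum_(y <- ys) weight ys y * y ^+ m.

(* By [weight_series_cons], the coefficients of
   \prod_(y <- ys) (1 - (y + 1) t) / (1 - y t). *)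
Definition weight_series ys M := if M is M'.+1 then - weighted_powsum ys M' else 1.

Lemma weight_cons_head c ys : c \notin ys ->
  weight (c :: ys) c = \prod_(b <- ys) (1 - (c - b)^-1).
Proof.
move=> c_ys; rewrite /weight big_cons eqxx big_seq_cond [RHS]big_seq.
apply: eq_bigl => b; case ys_b: (b \in ys) => //=.
by apply: contraNneq c_ys => <-.
Qed.

Lemma weight_cons c ys y : y \in ys -> c \notin ys ->
  weight (c :: ys) y = (1 - (y - c)^-1) * weight ys y.
Proof.
move=> ys_y c_ys; rewrite /weight big_cons.
by case: eqP => // yc; rewrite yc ys_y in c_ys.
Qed.

Lemma prod_partial_fractions ys u : uniq ys -> u \notin ys ->
  \prod_(b <- ys) (1 - (u - b)^-1) = 1 - \sum_(y <- ys) weight ys y / (u - y).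
Proof.
elim: ys u => [|c ys IH] u; first by rewrite !big_nil subr0.
rewrite /= in_cons negb_or => /andP [c_ys uniq_ys] /andP [uc u_ys].
rewrite big_cons IH // big_cons weight_cons_head // IH //.
have uc' : u - c != 0 by rewrite subr_eq0.
rewrite [X in _ = 1 - (_ + X)](eq_big_seq (fun y => weight ys y / (u - y)
   + weight ys y / (c - y) * (u - c)^-1 - weight ys y / (u - y) * (u - c)^-1)).
  by rewrite sumrB big_split /= -!mulr_suml; ring.
move=> y ys_y; rewrite weight_cons //.
have yc : y - c != 0 by rewrite subr_eq0; apply: contraNneq c_ys => <-.
have cy : c - y != 0 by rewrite subr_eq0; apply: contraNneq c_ys => ->.
have uy : u - y != 0 by rewrite subr_eq0; apply: contraNneq u_ys => ->.
by field; rewrite uc' uy cy yc.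
Qed.

Lemma weight_series_cons c ys M : uniq (c :: ys) ->
  weight_series (c :: ys) M = series_mul (factor_series c) (weight_series ys) M.
Proof.
case/andP=> c_ys uniq_ys; case: M => [|M]; first by rewrite /series_mul big_ord1 mulr1.
have yc y : y \in ys -> y - c != 0.
  by move=> ys_y; rewrite subr_eq0; apply: contraNneq c_ys => <-.
have cy y : y \in ys -> c - y != 0.
  by move=> ys_y; rewrite subr_eq0; apply: contraNneq c_ys => ->.
have geometric : \sum_(i < M) c ^+ i * weighted_powsum ys (M.-1 - i)
    = \sum_(y <- ys) weight ys y * ((y ^+ M - c ^+ M) / (y - c)).
  rewrite /weighted_powsum; under eq_bigr do rewrite mulr_sumr.
  rewrite exchange_big /=; apply: eq_big_seq => y ys_y.
  rewrite subrXX mulrAC divff ?yc // mul1r mulr_sumr.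
  by apply: eq_bigr => i _; ring.
have expand_rhs : series_mul (factor_series c) (weight_series ys) M.+1
    = - weighted_powsum ys M + \sum_(i < M) c ^+ i * weighted_powsum ys (M.-1 - i)
      - c ^+ M.
  rewrite /series_mul big_ord_recl big_ord_recr /= subnn mul1r mulr1 addrA.
  congr (_ + _ + _); apply: eq_bigr => i _.
  rewrite /bump /= add0n add1n subSS.
  have -> : (M - i = (M.-1 - i).+1)%N by have := ltn_ord i; lia.
  exact: mulrNN.
rewrite expand_rhs geometric /= /weighted_powsum big_cons weight_cons_head //.
rewrite prod_partial_fractions //.
rewrite [X in - (_ + X) = _](eq_big_seq (fun y => weight ys y * y ^+ M
   - weight ys y * ((y ^+ M - c ^+ M) / (y - c)) + weight ys y / (c - y) * c ^+ M)).
  by rewrite big_split sumrB /= -mulr_suml; ring.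
move=> y ys_y; rewrite weight_cons //.
by field; rewrite yc ?cy.
Qed.

Lemma is_logder_weight_series ys : uniq ys ->
  is_logder (fun k => \sum_(y <- ys) (y ^+ k - (y + 1) ^+ k)) (weight_series ys).
Proof.
elim: ys => [_ M|c ys IH /[dup] uniq_cys /andP [_ uniq_ys]].
  rewrite /= /weighted_powsum big_nil oppr0 mulr0 /series_mul big1 // => i _.
  by rewrite big_nil mul0r.
apply: (eq_is_logder _ _ (is_logder_mul (is_logder_factor_series c) (IH uniq_ys))).
  by move=> k; rewrite big_cons.
by move=> M; rewrite weight_series_cons.
Qed.

End Weights.

Lemma sum_exprB_shift (R : comNzRingType) (s : seq R) k :
  \sum_(y <- s) (y ^+ k - (y + 1) ^+ k) = - \sum_(l < k) (\sum_(y <- s) y ^+ l) * 'C(k, l)%:R.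
Proof.
under eq_bigr do rewrite exprD1n big_ord_recr /= binn mulr1n opprD addrCA subrr addr0.
by rewrite sumrN exchange_big; congr (- _); apply: eq_bigr => l _; rewrite sumrMnl mulr_natr.
Qed.

Definition polynomial_in (X : Type) (P : X -> Prop) (m : nat) (G : X -> 'I_m -> algC)
    (f : X -> algC) :=
  exists Q : seq (algC * ('I_m -> nat)), forall x, P x -> f x = mpoly_eval m Q (G x).

Section PolynomialIn.
Variables (X : Type) (P : X -> Prop) (m : nat) (G : X -> 'I_m -> algC).
Local Notation polyin := (polynomial_in P G).

Lemma polynomial_in_ext f f' : polyin f -> (forall x, P x -> f x = f' x) -> polyin f'.
Proof. by move=> [Q fQ] ff'; exists Q => x Px; rewrite -ff' // fQ. Qed.

Lemma polynomial_in_const c : polyin (fun _ => c).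
Proof.
exists [:: (c, fun _ => 0%N)] => x _.
by rewrite /mpoly_eval big_seq1 big1 ?mulr1 // => k _; rewrite expr0.
Qed.

Lemma polynomial_in_gen k : polyin (fun x => G x k).
Proof.
exists [:: (1, fun j => (j == k) : nat)] => x _.
rewrite /mpoly_eval big_seq1 mul1r (bigD1 k) //= eqxx expr1 big1 ?mulr1 //.
by move=> j /negbTE ->; rewrite expr0.
Qed.

Lemma polynomial_inD f h : polyin f -> polyin h -> polyin (fun x => f x + h x).
Proof.
move=> [Q1 fQ1] [Q2 hQ2]; exists (Q1 ++ Q2) => x Px.
by rewrite /mpoly_eval big_cat /= fQ1 // hQ2.
Qed.

Lemma polynomial_inM f h : polyin f -> polyin h -> polyin (fun x => f x * h x).
Proof.
move=> [Q1 fQ1] [Q2 hQ2].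
exists [seq (t1.1 * t2.1, fun k => (t1.2 k + t2.2 k)%N) | t1 <- Q1, t2 <- Q2] => x Px.
rewrite fQ1 // hQ2 // /mpoly_eval big_allpairs_dep /= mulr_suml.
apply: eq_bigr => t1 _; rewrite mulr_sumr; apply: eq_bigr => t2 _ /=.
under [in RHS]eq_bigr do rewrite exprD.
by rewrite big_split /=; ring.
Qed.

Lemma polynomial_in_sum N (F : nat -> X -> algC) :
  (forall i, (i < N)%N -> polyin (F i)) -> polyin (fun x => \sum_(i < N) F i x).
Proof.
elim: N => [|N IH] FP.
  by apply: polynomial_in_ext (polynomial_in_const 0) _ => x _; rewrite big_ord0.
apply: polynomial_in_ext (polynomial_inD (IH _) (FP N _)) _ => [i lt_iN||x _].
- by apply: FP; apply: ltnW.
- exact: ltnSn.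
- by rewrite big_ord_recr.
Qed.

End PolynomialIn.

Arguments polynomial_in_const {X P m G} c.
Arguments polynomial_in_gen {X P m G} k.

Section RestrictedCasimir.
Variables n r p : nat.
Implicit Types (x : 'I_r -> algC) (k l : nat).

Definition centre : algC := n.-1%:R / 2%:R.

(* [nu n r x] on natural indices, so that ranges of indices can be split. *)
Definition nu_nat x k : algC :=
  if (k < r)%N then xext r x k
  else if (n - r <= k)%N then - xext r x (n.-1 - k)
  else 0.

(* Centred so that the spectrum of the restricted weight is symmetric under y |-> -y. *)
Definition shifted x k : algC := nu_nat x k + (n.-1 - k)%:R - centre.

Definition spectrum x : seq algC := [seq shifted x i | i : 'I_n <- index_enum 'I_n].

Definition xrho x (i : 'I_r) : algC := x i + rho n i.

Lemma shifted_sub x (i j : 'I_n) :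
  shifted x i - shifted x j = nu n r x i - nu n r x j + j%:R - i%:R.
Proof.
rewrite /shifted !natrB; first by rewrite /nu_nat /nu; ring.
all: by have := ltn_ord i; have := ltn_ord j; lia.
Qed.

Lemma shifted_inj x : generic n r x -> injective (fun i : 'I_n => shifted x i).
Proof.
move=> gen_x i j eq_ij; apply/eqP/negPn/negP => neq_ij.
by move: (gen_x i j neq_ij); rewrite -shifted_sub eq_ij subrr eqxx.
Qed.

Lemma uniq_spectrum x : generic n r x -> uniq (spectrum x).
Proof. by move=> gen_x; rewrite map_inj_uniq ?index_enum_uniq //; apply: shifted_inj. Qed.

Lemma casimir_spectrum x : generic n r x ->
  casimir n p (nu n r x) =
  \sum_(m < p.+1) (centre ^+ (p - m) *+ 'C(p, m)) * weighted_powsum (spectrum x) m.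
Proof.
move=> gen_x; rewrite /casimir /weighted_powsum.
under [RHS]eq_bigr do rewrite big_map mulr_sumr.
rewrite exchange_big /=; apply: eq_bigr => i _.
have -> : \prod_(j < n | j != i) (1 - (nu n r x i - nu n r x j + j%:R - i%:R)^-1) =
          weight (spectrum x) (shifted x i).
  rewrite /weight big_map; apply: eq_big => [j|j _]; last by rewrite shifted_sub.
  by rewrite (inj_eq (shifted_inj gen_x)).
have -> : nu n r x i + (n.-1 - i)%:R = centre + shifted x i.
  by rewrite [RHS]addrC subrK.
rewrite exprDn mulr_suml; apply: eq_bigr => m _; ring.
Qed.

Hypothesis le_2r_n : (2 * r <= n)%N.

Lemma shifted_head x (i : 'I_r) : shifted x i = xrho x i.
Proof.
have lt_ir := ltn_ord i.
rewrite /shifted /nu_nat lt_ir /xext valK /centre /xrho /rho -subn1 -subnDA !natrB; try lia.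
by rewrite /= !natrD; field.
Qed.

Lemma shifted_tail x (i : 'I_r) : shifted x (n.-1 - i) = - xrho x i.
Proof.
have lt_ir := ltn_ord i.
rewrite /shifted /nu_nat ifF ?ifT; try lia.
rewrite subKn; last lia.
rewrite /xext valK /centre /xrho /rho -subn1 !natrB; try lia.
by rewrite /= !natrD; field.
Qed.

Lemma shifted_middle x k : (r <= k < n - r)%N -> shifted x k = (n.-1 - k)%:R - centre.
Proof. by move=> mid_k; rewrite /shifted /nu_nat !ifF ?add0r //; lia. Qed.

Definition middle_powsum l : algC := \sum_(r <= k < n - r) ((n.-1 - k)%:R - centre) ^+ l.

Lemma powsum_spectrum x l :
  \sum_(y <- spectrum x) y ^+ l = powsum r l (xrho x) * (1 + (-1) ^+ l) + middle_powsum l.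
Proof.
rewrite big_map -/(\sum_(i < n) shifted x i ^+ l).
rewrite -(big_mkord xpredT (fun k => shifted x k ^+ l)) (big_cat_nat _ (n := r)) //=; last lia.
rewrite (big_cat_nat _ (m := r) (n := n - r)) /=; [|lia|lia].
have head : \sum_(0 <= k < r) shifted x k ^+ l = powsum r l (xrho x).
  by rewrite big_mkord; apply: eq_bigr => i _; rewrite shifted_head.
have middle : \sum_(r <= k < n - r) shifted x k ^+ l = middle_powsum l.
  by apply: eq_big_nat => k mid_k; rewrite shifted_middle.
have tail : \sum_(n - r <= k < n) shifted x k ^+ l = (-1) ^+ l * powsum r l (xrho x).
  rewrite -{1}[(n - r)%N]add0n big_addn (_ : n - (n - r) = r)%N; last lia.
  rewrite big_nat_rev big_mkord mulr_sumr; apply: eq_bigr => i _ /=.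
  rewrite (_ : r - i.+1 + (n - r) = n.-1 - i)%N; last by have := ltn_ord i; lia.
  by rewrite shifted_tail (exprNn (xrho x i)).
by rewrite head middle tail; ring.
Qed.

Definition even_powsums x (k : 'I_p./2) : algC := powsum r (2 * k.+1) (xrho x).

Local Notation polyin f := (polynomial_in (generic n r) even_powsums f).

Lemma polynomial_in_powsum_spectrum l : (l <= p)%N ->
  polyin (fun x => \sum_(y <- spectrum x) y ^+ l).
Proof.
move=> le_lp.
suff ps : polyin (fun x => powsum r l (xrho x) * (1 + (-1) ^+ l)).
  apply: polynomial_in_ext (polynomial_inD ps (polynomial_in_const (middle_powsum l))) _.
  by move=> x _; rewrite powsum_spectrum.
case odd_l: (odd l).
  apply: polynomial_in_ext (polynomial_in_const 0) _ => x _.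
  by rewrite -signr_odd odd_l expr1 addrN mulr0.
have l_half : l = (l./2).*2 by rewrite -[LHS]odd_double_half odd_l.
rewrite -signr_odd odd_l expr0 l_half.
case l_half_k: (l./2) => [|k].
  apply: polynomial_in_ext (polynomial_in_const (r%:R * (1 + 1))) _ => x _.
  by rewrite /powsum; under eq_bigr do rewrite expr0; rewrite sumr_const card_ord mulr_natl.
have lt_k : (k.+1 <= p./2)%N by rewrite -l_half_k half_leq.
apply: polynomial_in_ext (polynomial_inM (polynomial_in_gen (P := generic n r)
  (G := even_powsums) (Ordinal lt_k)) (polynomial_in_const (1 + 1))) _ => x _.
by rewrite /even_powsums -mul2n.
Qed.

Lemma polynomial_in_shift_powsum k : (k <= p.+1)%N ->
  polyin (fun x => \sum_(y <- spectrum x) (y ^+ k - (y + 1) ^+ k)).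
Proof.
move=> le_kp.
have sum_powsums :
    polyin (fun x => \sum_(l < k) (\sum_(y <- spectrum x) y ^+ l) * 'C(k, l)%:R).
  apply: (polynomial_in_sum (F := fun l x => (\sum_(y <- spectrum x) y ^+ l) * 'C(k, l)%:R)).
  move=> l lt_lk.
  apply: polynomial_inM (polynomial_in_const _).
  by apply: polynomial_in_powsum_spectrum; rewrite -ltnS (leq_trans lt_lk).
apply: polynomial_in_ext (polynomial_inM (polynomial_in_const (-1)) sum_powsums) _.
by move=> x _; rewrite sum_exprB_shift mulN1r.
Qed.

Lemma polynomial_in_weight_series M : (M <= p.+1)%N ->
  polyin (fun x => weight_series (spectrum x) M).
Proof.
elim/ltn_ind: M => -[_ _|M IH le_Mp]; first exact: polynomial_in_const.
have rhs : polyin (fun x =>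
    series_mul (fun k => \sum_(y <- spectrum x) (y ^+ k.+1 - (y + 1) ^+ k.+1))
               (weight_series (spectrum x)) M).
  apply: (polynomial_in_sum (F := fun i x =>
    (\sum_(y <- spectrum x) (y ^+ i.+1 - (y + 1) ^+ i.+1))
    * weight_series (spectrum x) (M - i))).
  move=> i lt_iM; apply: polynomial_inM.
    by apply: polynomial_in_shift_powsum; apply: leq_trans le_Mp.
  by apply: IH; rewrite ?ltnS ?leq_subr // (leq_trans (leq_subr _ _) (ltnW le_Mp)).
apply: polynomial_in_ext (polynomial_inM (polynomial_in_const M.+1%:R^-1) rhs) _.
move=> x gen_x; rewrite -(is_logder_weight_series (uniq_spectrum gen_x)).
by rewrite mulKf // pnatr_eq0.
Qed.

Lemma polynomial_in_casimir : polyin (fun x => casimir n p (nu n r x)).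
Proof.
apply: polynomial_in_ext (polynomial_in_sum (N := p.+1)
  (F := fun m x => (centre ^+ (p - m) *+ 'C(p, m)) * weighted_powsum (spectrum x) m) _) _.
  move=> m le_mp; apply: polynomial_inM (polynomial_in_const _) _.
  apply: polynomial_in_ext (polynomial_inM (polynomial_in_const (-1))
    (polynomial_in_weight_series le_mp)) _.
  by move=> x _; rewrite mulN1r opprK.
by move=> x gen_x; rewrite casimir_spectrum.
Qed.

End RestrictedCasimir.

Theorem mainTheorem3 (r n p : nat) :
  (1 <= r)%N -> (2 * r <= n)%N -> (1 <= p)%N ->
  exists Q : seq (algC * ('I_(p./2) -> nat)),
    forall x : 'I_r -> algC, generic n r x ->
      casimir n p (nu n r x) =
      mpoly_eval (p./2) Q (fun k : 'I_(p./2) =>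
        powsum r (2 * k.+1) (fun i : 'I_r => x i + rho n i)).
Proof. by move=> _ le_2r_n _; apply: polynomial_in_casimir. Qed.
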